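(* Let $P$ be a finite poset and let $\varphi: P\to P$ be a map such that $\varphi\circ\varphi=\mathrm{id}_P$ and, for all $x,y\in P$, $x\le y \iff \varphi(x)\le\varphi(y)$. (i) If $\varphi$ has no fixed points, then $P$ is a $\forall$-game. (ii) If the set of fixed points of $\varphi$ is nonempty and has a minimum element (a fixed point $z$ with $z\le w$ for every fixed point $w$), then $P$ is an $\exists$-game.
   Context: A finite poset $P$ defines a poset game: two players alternate moves; a move consists of choosing a point $x$ of the current poset $Q$ and replacing $Q$ by $Q_x:=\{y\in Q: x\not\le y\}$ (i.e., removing $x$ and every point above it); the first player unable to move (because the poset is empty) loses. $P$ is an $\exists$-game if the player who moves first has a winning strategy, and a $\forall$-game otherwise (i.e., the second player has a winning strategy). *)

From HB Require Import structures.
From mathcomp Require Import all_boot all_order.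
Set Implicit Arguments. Unset Strict Implicit. Unset Printing Implicit Defensive.
Import Order.Theory.
Local Open Scope order_scope.

Section PosetGame.
Variables (d : Order.disp_t) (T : finPOrderType d).

Definition move (Q : {set T}) (x : T) : {set T} := [set y in Q | ~~ (x <= y)].

(* winf n Q: the player to move in position Q wins, computed with fuel n;
   correct whenever n >= #|Q| (each move strictly decreases the size). *)
Fixpoint winf (n : nat) (Q : {set T}) : bool :=
  match n with
  | 0 => false
  | n'.+1 => [exists x in Q, ~~ winf n' (move Q x)]
  end.

Definition first_wins (Q : {set T}) : bool := winf #|Q| Q.

Definition exists_game : bool := first_wins [set: T].
Definition forall_game : bool := ~~ first_wins [set: T].
End PosetGame.

(* Tweedledum-Tweedledee: when the involutive order automorphism phi has no
   fixed point, the second player answers every move x by phi x.  Since x and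
   phi x are incomparable (x <= phi x would give phi x <= x), phi x is still
   available, and the two moves leave a phi-stable position without fixed
   points.  When the fixed points have a minimum z, the first player opens with
   z: the remaining points y (those with ~~ (z <= y)) form a phi-stable set
   containing no fixed point, and the first player takes over the mirroring role. *)
From HB Require Import structures.
From mathcomp Require Import all_boot all_order.
Import Order.Theory.
Local Open Scope order_scope.
Set Implicit Arguments.

Section PosetGameRecursion.
Variables (d : Order.disp_t) (T : finPOrderType d).

Lemma card_move (Q : {set T}) x : x \in Q -> (#|move Q x| < #|Q|)%N.
Proof.
move=> xQ; rewrite (cardsD1 x Q) xQ add1n ltnS; apply: subset_leq_card.
apply/subsetP => y; rewrite /move !inE => /andP[yQ nxy]; rewrite yQ andbT.
by apply: contraNneq nxy => ->.
Qed.

Lemma winf0 n : winf n (set0 : {set T}) = false.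
Proof. by case: n => //= n; apply/existsP => -[x]; rewrite inE. Qed.

Lemma winf_fuel n m (Q : {set T}) :
  (#|Q| <= n)%N -> (#|Q| <= m)%N -> winf n Q = winf m Q.
Proof.
elim: n m Q => [|n IH] m Q Qn Qm.
  by move: Qn; rewrite leqn0 cards_eq0 => /eqP->; rewrite !winf0.
case: m Qm => [|m] Qm.
  by move: Qm; rewrite leqn0 cards_eq0 => /eqP->; rewrite !winf0.
apply: eq_existsb_in => x xQ; congr negb.
by apply: IH; rewrite -ltnS (leq_trans (card_move xQ)).
Qed.

Lemma first_winsE (Q : {set T}) :
  first_wins Q = [exists x in Q, ~~ first_wins (move Q x)].
Proof.
rewrite /first_wins; case cardQ: #|Q| => [|n] /=.
  move/eqP: cardQ; rewrite cards_eq0 => /eqP->.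
  by apply/esym/existsP => -[x]; rewrite inE.
apply: eq_existsb_in => x xQ; rewrite (@winf_fuel n #|move Q x|) //.
by rewrite -ltnS -cardQ card_move.
Qed.

End PosetGameRecursion.

Section Mirror.
Variables (d : Order.disp_t) (T : finPOrderType d) (phi : T -> T).
Hypothesis phiK : involutive phi.
Hypothesis le_phi : {mono phi : x y / x <= y}.

Definition phi_invariant (Q : {set T}) := forall y, (phi y \in Q) = (y \in Q).
Definition phi_fixfree (Q : {set T}) := {in Q, forall y, phi y != y}.

Lemma le_phiC x y : (x <= phi y) = (phi x <= y).
Proof. by rewrite -le_phi phiK. Qed.

Lemma phi_in_move (Q : {set T}) x : phi_invariant Q -> phi_fixfree Q ->
  x \in Q -> phi x \in move Q x.
Proof.
move=> Qinv Qfree xQ; rewrite inE Qinv xQ /=.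
by apply: contra (Qfree x xQ) => le_x_phix; rewrite eq_le -le_phiC le_x_phix.
Qed.

Lemma move_phi_invariant (Q : {set T}) x :
  phi_invariant Q -> phi_invariant (move (move Q x) (phi x)).
Proof. by move=> Qinv y; rewrite !inE Qinv le_phi le_phiC andbAC. Qed.

Lemma move_phi_fixfree (Q : {set T}) x :
  phi_fixfree Q -> phi_fixfree (move (move Q x) (phi x)).
Proof. by move=> Qfree y; rewrite !inE => /andP[/andP[/Qfree]]. Qed.

Lemma mirror_loses (Q : {set T}) :
  phi_invariant Q -> phi_fixfree Q -> ~~ first_wins Q.
Proof.
have [n] := ubnP #|Q|; elim: n Q => // n IH Q ltQn Qinv Qfree.
rewrite first_winsE; apply/existsP => -[x /andP[xQ /negP]]; apply; rewrite first_winsE.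
have phix_in := phi_in_move Qinv Qfree xQ.
apply/existsP; exists (phi x); rewrite phix_in /=.
apply: IH; [|exact: move_phi_invariant|exact: move_phi_fixfree].
exact: leq_trans (ltn_trans (card_move phix_in) (card_move xQ)) ltQn.
Qed.

End Mirror.

Theorem mainTheorem1 (d : Order.disp_t) (T : finPOrderType d) (phi : T -> T)
  (hinv : forall x, phi (phi x) = x)
  (hord : forall x y : T, (x <= y) <-> (phi x <= phi y)) :
  ((forall x, phi x <> x) -> forall_game T) /\
  ((exists z, phi z = z /\ (forall w, phi w = w -> z <= w)) -> exists_game T).
Proof.
have le_phi : {mono phi : x y / x <= y} by move=> x y; apply/idP/idP; apply hord.
split=> [nofix | [z [phiz zmin]]].
  apply: (mirror_loses hinv le_phi) => [y|y _]; first by rewrite !inE.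
  exact/eqP/nofix.
rewrite /exists_game first_winsE; apply/existsP; exists z; rewrite inE /=.
apply: (mirror_loses hinv le_phi) => [y|y].
  by rewrite !inE -{1}phiz le_phi.
by rewrite !inE => z_le_y; apply/eqP => /zmin; apply/negP.
Qed.
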